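(* (1) If $A\in C^\alpha(\Sigma,\mathbb R)$ then $L(A)\in C^\alpha(\Sigma,\mathbb R)$. (2) The linear map $L:C^\alpha(\Sigma,\mathbb R)\to C^\alpha(\Sigma,\mathbb R)$ is continuous. (3) $\mathcal B\subset\ker L$. (4) $L$ induces a continuous linear map $C^\alpha/\mathcal B\to C^\alpha/\mathcal B^*$. (5) The linear map $L^*:C^\alpha(\Sigma,\mathbb R)\to C^\alpha(\Sigma,\mathbb R)$ is continuous and induces a continuous linear map $C^\alpha/\mathcal B^*\to C^\alpha/\mathcal B$ which is the inverse of the map induced by $L$; in particular $L^*(L(A))\in A+\mathcal B$ for every $A\in C^\alpha$.
   Context: $\Sigma=\{1,\dots,d\}^{\mathbb N}$ with metric $d(\omega,\nu)=\lambda^N$, $N=\min\{k:\omega_k\ne\nu_k\}$, $0<\lambda<1$; $C^\alpha(\Sigma,\mathbb R)$ with norm $\|F\|_\alpha=\sup|F|+\sup_{x\ne y}|F(x)-F(y)|/d(x,y)^\alpha$. $T$ denotes the shift on the first factor (points $x$), $\sigma$ the shift on the second factor (points $\omega$) of $\Sigma\times\Sigma$. For $u,v\in\Sigma$ let $\tau_u(v)=(u_0,v_0,v_1,\dots)$, and for $n\ge1$, $\tau^{(n)}_u(v)=(u_{n-1},\dots,u_1,u_0,v_0,v_1,\dots)$, $\tau^{(0)}_u=\mathrm{id}$. Fix $\bar x,\bar\omega\in\Sigma$. For $A\in C^\alpha$ define $L(A)=A^*$ by $A^*(\omega)=A(\tau_\omega\bar x)+\sum_{n\ge1}[A(\tau^{(n+1)}_\omega\bar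 x)-A(\tau^{(n)}_{\sigma\omega}\bar x)]$ (this is the dual potential: with $W_A(x,\omega)=\sum_{n\ge1}[A(\tau^{(n)}_\omega x)-A(\tau^{(n)}_\omega\bar x)]$ one has $A^*(\omega)=A(\tau_\omega x)+W_A(\tau_\omega x,\sigma\omega)-W_A(x,\omega)$ for all $x$). For $\psi\in C^\alpha$ define $L^*(\psi)(x)=\psi(\tau_x\bar\omega)+\sum_{n\ge1}[\psi(\tau^{(n+1)}_x\bar\omega)-\psi(\tau^{(n)}_{Tx}\bar\omega)]$. $\mathcal B=\{u\circ T-u:u\in C^\alpha\}$ and $\mathcal B^*=\{u\circ\sigma-u:u\in C^\alpha\}$ (closed subspaces of $C^\alpha$), with quotient norms $[z+\mathcal B]_\alpha=\inf_{b\in\mathcal B}\|z+b\|_\alpha$. *)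

From Stdlib Require Import Reals Lra Lia Arith ClassicalEpsilon.
Open Scope R_scope.

Definition Sym (d : nat) : Type := {k : nat | (1 <= k <= d)%nat}.
Definition Seq (d : nat) : Type := nat -> Sym d.

(* shift (this is T on the x-factor and sigma on the omega-factor) *)
Definition shift {d : nat} (x : Seq d) : Seq d := fun k => x (S k).

Definition tau {d : nat} (u v : Seq d) : Seq d :=
  fun k => match k with O => u O | S j => v j end.

(* tau^(n)_u(v) = (u_{n-1}, ..., u_1, u_0, v_0, v_1, ...);  tau^(0)_u = id *)
Definition taun {d : nat} (n : nat) (u v : Seq d) : Seq d :=
  fun k => if (k <? n)%nat then u (n - 1 - k)%nat else v (k - n)%nat.

(* N is the first index where x and y differ; then d(x,y) = lam^N *)
Definition first_diff {d : nat} (x y : Seq d) (N : nat) : Prop :=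
  (forall k, (k < N)%nat -> x k = y k) /\ x N <> y N.

(* sup of a nonempty bounded-above set; 0 by convention otherwise
   (only used on sets of nonnegative reals, where sup of empty set = 0) *)
Definition sup_R (E : R -> Prop) : R :=
  match excluded_middle_informative (bound E /\ exists x, E x) with
  | left H => proj1_sig (completeness E (proj1 H) (proj2 H))
  | right _ => 0
  end.

Definition inf_R (E : R -> Prop) : R := - sup_R (fun r => E (- r)).

(* value of the series sum_{n>=0} f n (0 if it does not converge) *)
Definition series (f : nat -> R) : R :=
  match excluded_middle_informative (exists l, infinite_sum f l) with
  | left H => proj1_sig (constructive_indefinite_description _ H)
  | right _ => 0
  end.

Definition holder (d : nat) (lam alpha : R) (F : Seq d -> R) : Prop :=
  (exists M, forall x, Rabs (F x) <= M) /\
  (exists C, forall x y N, first_diff x y N ->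
     Rabs (F x - F y) <= C * Rpower (lam ^ N) alpha).

Definition holder_norm (d : nat) (lam alpha : R) (F : Seq d -> R) : R :=
  sup_R (fun r => exists x, r = Rabs (F x)) +
  sup_R (fun r => exists x y N, first_diff x y N /\
                    r = Rabs (F x - F y) / Rpower (lam ^ N) alpha).

(* membership in B = {u o T - u : u in C^alpha}; since T and sigma are both
   the shift on Sigma, this is also membership in B^* = {u o sigma - u} *)
Definition in_cob (d : nat) (lam alpha : R) (F : Seq d -> R) : Prop :=
  exists u, holder d lam alpha u /\ forall x, F x = u (shift x) - u x.

Definition qnorm (d : nat) (lam alpha : R) (F : Seq d -> R) : R :=
  inf_R (fun r => exists u, holder d lam alpha u /\
            r = holder_norm d lam alpha (fun x => F x + (u (shift x) - u x))).

Definition Lop {d : nat} (base : Seq d) (A : Seq d -> R) : Seq d -> R :=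
  fun w => A (tau w base) +
    series (fun n => A (taun (n + 2) w base) - A (taun (n + 1) (shift w) base)).

Definition L {d : nat} (xbar : Seq d) := Lop xbar.
Definition Lstar {d : nat} (wbar : Seq d) := Lop wbar.

Definition continuous_wrt {d : nat} (dom : (Seq d -> R) -> Prop)
  (N1 N2 : (Seq d -> R) -> R) (f : (Seq d -> R) -> (Seq d -> R)) : Prop :=
  forall A, dom A -> forall eps, 0 < eps -> exists delta, 0 < delta /\
    forall B, dom B -> N1 (fun x => B x - A x) < delta ->
      N2 (fun x => f B x - f A x) < eps.

Definition linear_on {d : nat} (dom : (Seq d -> R) -> Prop)
  (f : (Seq d -> R) -> (Seq d -> R)) : Prop :=
  forall A B c, dom A -> dom B ->
    forall w, f (fun x => A x + c * B x) w = f A w + c * f B w.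

From Stdlib Require Import Reals Lra Lia Classical ClassicalEpsilon FunctionalExtensionality.
Open Scope R_scope.

(** With [q = lam ^ alpha], a Hölder function [A] varies by [O(q ^ n)] between
   sequences sharing their first [n] symbols.  The [n]-th term of the series
   defining [L A] compares [A] at two sequences with [n + 1] common symbols,
   so the series converges geometrically, uniformly in [w], and sequences [w]
   sharing many symbols give series sharing many terms: this gives (1) and
   (2).  On a coboundary [u o T - u] the series telescopes to
   [u (tau_w xbar) - u xbar], which cancels the first term; this is (3), and
   (4) follows because [L] then factors through the quotient.  For (5), the
   function [W (y, w) = sum_m A (tau^(m+1)_w y) - A (tau^(m+1)_w xbar)]
   satisfies [L A (w) = A (tau_w y) + W (tau_w y, sigma w) - W (y, w)] for
   every [y]; substituting this into the series defining [L^*] and telescoping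
   once more yields [L^* (L A) x - A x = W (x, wbar) - W (sigma x, wbar)], the
   coboundary of the Hölder function [- W (., wbar)].  Since [L] and [L^*] are
   the same operator [Lop] with different base points, the claims about [L^*]
   are those about [L]. *)

(** * Geometric sequences and series *)

Lemma Rpower_lt_1 lam alpha : 0 < lam < 1 -> 0 < alpha -> 0 < Rpower lam alpha < 1.
Proof.
  intros Hl Ha. split; [apply exp_pos|].
  replace 1 with (Rpower 1 alpha) by (unfold Rpower; rewrite ln_1, Rmult_0_r; apply exp_0).
  apply Rlt_Rpower_l; lra.
Qed.

Lemma Rpower_pow_l lam alpha N : 0 < lam -> Rpower (lam ^ N) alpha = Rpower lam alpha ^ N.
Proof.
  intros Hl. rewrite <- (Rpower_pow N lam Hl), Rpower_mult, Rmult_comm, <- Rpower_mult.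
  apply Rpower_pow, exp_pos.
Qed.

Lemma pow_le_decr q m n : 0 < q < 1 -> (m <= n)%nat -> q ^ n <= q ^ m.
Proof.
  intros Hq Hmn. replace n with (m + (n - m))%nat by lia. rewrite pow_add.
  assert (0 < q ^ m) by (apply pow_lt; lra).
  assert (q ^ (n - m) <= 1) by (rewrite <- (pow1 (n - m)); apply pow_incr; lra).
  nra.
Qed.

Lemma Rdiv_le_of_le_mult a p C : 0 < p -> a <= C * p -> a / p <= C.
Proof. intros Hp H. apply Rmult_le_reg_r with p; [lra|]. field_simplify; lra. Qed.

Lemma Rle_mult_of_div_le a p C : 0 < p -> a / p <= C -> a <= C * p.
Proof. intros Hp H. replace a with (a / p * p) by (field; lra). apply Rmult_le_compat_r; lra. Qed.

Lemma Rabs_minus_le a b : Rabs (a - b) <= Rabs a + Rabs b.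
Proof. unfold Rminus. rewrite <- (Rabs_Ropp b). apply Rabs_triang. Qed.

Lemma Un_cv_abs_le_0 (u v : nat -> R) :
  (forall n, Rabs (u n) <= v n) -> Un_cv v 0 -> Un_cv u 0.
Proof.
  intros Huv Hv eps Heps. destruct (Hv eps Heps) as [N HN]. exists N. intros n Hn.
  specialize (HN n Hn). specialize (Huv n). unfold R_dist in *. rewrite Rminus_0_r in *.
  pose proof (Rle_abs (v n)). lra.
Qed.

Lemma Un_cv_geom c q : 0 < q < 1 -> Un_cv (fun n => c * q ^ n) 0.
Proof.
  intros Hq. replace 0 with (c * 0) by ring. apply CV_mult.
  - intros eps Heps. exists O. intros. unfold R_dist. rewrite Rminus_diag, Rabs_R0. lra.
  - intros eps Heps. destruct (pow_lt_1_zero q) with eps as [N HN]; [rewrite Rabs_right; lra|lra|].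
    exists N. intros n Hn. unfold R_dist. rewrite Rminus_0_r. auto.
Qed.

Lemma series_of_infinite_sum f l : infinite_sum f l -> series f = l.
Proof.
  intros H. unfold series. destruct excluded_middle_informative as [e|n].
  - destruct (constructive_indefinite_description _ e) as [l' Hl']; simpl.
    eapply uniqueness_sum; eauto.
  - exfalso; eauto.
Qed.

Lemma infinite_sum_ext f g l : (forall n, f n = g n) -> infinite_sum f l -> infinite_sum g l.
Proof.
  intros Hfg H. apply (Un_cv_ext (fun N => sum_f_R0 f N)); auto. intros; apply sum_eq; auto.
Qed.

Lemma infinite_sum_plus_scal f g l1 l2 c : infinite_sum f l1 -> infinite_sum g l2 ->
  infinite_sum (fun n => f n + c * g n) (l1 + c * l2).
Proof.
  intros H1 H2. apply (Un_cv_ext (fun N => sum_f_R0 f N + c * sum_f_R0 g N)).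
  - intros N. rewrite plus_sum, scal_sum. f_equal. apply sum_eq. intros; ring.
  - apply CV_plus; [exact H1|]. apply CV_mult; [|exact H2].
    intros eps Heps. exists O. intros. unfold R_dist. rewrite Rminus_diag, Rabs_R0. lra.
Qed.

Lemma infinite_sum_minus f g l1 l2 : infinite_sum f l1 -> infinite_sum g l2 ->
  infinite_sum (fun n => f n - g n) (l1 - l2).
Proof.
  intros H1 H2. replace (l1 - l2) with (l1 + -1 * l2) by ring.
  eapply infinite_sum_ext; [|apply (infinite_sum_plus_scal _ _ _ _ (-1) H1 H2)].
  intros; simpl; ring.
Qed.

Lemma infinite_sum_dominated (f g : nat -> R) lg :
  (forall n, Rabs (f n) <= g n) -> infinite_sum g lg ->
  exists l, infinite_sum f l /\ Rabs l <= lg.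
Proof.
  intros Hfg Hg.
  assert (Habs : {l | Un_cv (fun N => sum_f_R0 (fun n => Rabs (f n)) N) l}).
  { apply (Rseries_CV_comp _ g); [|exists lg; exact Hg].
    intros n; split; [apply Rabs_pos|apply Hfg]. }
  destruct (cv_cauchy_2 f (cauchy_abs f (cv_cauchy_1 _ Habs))) as [l Hl].
  exists l. split; [exact Hl|].
  exact (sum_cv_maj g (fun n _ => f n) 0 l lg Hl Hg (fun n => Hfg n)).
Qed.

Lemma infinite_sum_telescope (a : nat -> R) :
  Un_cv a 0 -> infinite_sum (fun n => a n - a (S n)) (a O).
Proof.
  intros H. assert (Hs : forall N, sum_f_R0 (fun n => a n - a (S n)) N = a O - a (S N)).
  { induction N as [|N IH]; simpl; [ring|rewrite IH; ring]. }
  intros eps Heps. destruct (H eps Heps) as [N HN]. exists N. intros n Hn.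
  rewrite Hs. unfold R_dist in *. replace (a O - a (S n) - a O) with (- (a (S n) - 0)) by ring.
  rewrite Rabs_Ropp. apply HN. lia.
Qed.

(* Dominated by the telescoping series of [B / (1 - q) * q ^ max (j + 1) m]. *)
Lemma infinite_sum_geom_tail q f B m : 0 < q < 1 -> 0 <= B ->
  (forall j, (S j < m)%nat -> f j = 0) -> (forall j, Rabs (f j) <= B * q ^ S j) ->
  exists l, infinite_sum f l /\ Rabs l <= B / (1 - q) * q ^ m.
Proof.
  intros Hq HB Hz Hf.
  set (c := B / (1 - q)). assert (Hc : 0 <= c) by (unfold c; apply Rle_mult_inv_pos; lra).
  set (t := fun j => c * q ^ Nat.max (S j) m).
  destruct (infinite_sum_dominated f (fun j => t j - t (S j)) (t O)) as [l [Hl Hlb]].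
  - intros j. unfold t. destruct (Compare_dec.lt_dec (S j) m) as [h|h].
    + rewrite Hz, Rabs_R0, !Nat.max_r by lia. lra.
    + rewrite !Nat.max_l by lia. eapply Rle_trans; [apply Hf|].
      unfold c. simpl. right. field. lra.
  - apply infinite_sum_telescope, (Un_cv_abs_le_0 _ (fun j => c * q ^ j));
      [|apply Un_cv_geom; auto].
    intros j. unfold t. rewrite Rabs_right.
    + apply Rmult_le_compat_l; auto. apply pow_le_decr; [auto|lia].
    + apply Rle_ge, Rmult_le_pos; auto. apply pow_le; lra.
  - exists l. split; auto. eapply Rle_trans; [apply Hlb|].
    apply Rmult_le_compat_l; auto. apply pow_le_decr; [auto|lia].
Qed.

Lemma infinite_sum_geom q f B : 0 < q < 1 -> 0 <= B ->
  (forall j, Rabs (f j) <= B * q ^ S j) -> exists l, infinite_sum f l /\ Rabs l <= B / (1 - q).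
Proof.
  intros Hq HB Hf. destruct (infinite_sum_geom_tail q f B 0) as [l [Hl Hb]]; auto; [intros; lia|].
  exists l. simpl in Hb. split; auto. lra.
Qed.

Lemma infinite_sum_diff_geom_tail q f g l1 l2 B m : 0 < q < 1 -> 0 <= B ->
  infinite_sum f l1 -> infinite_sum g l2 ->
  (forall j, (S j < m)%nat -> f j = g j) -> (forall j, Rabs (f j - g j) <= B * q ^ S j) ->
  Rabs (l1 - l2) <= B / (1 - q) * q ^ m.
Proof.
  intros Hq HB H1 H2 Heq Hfg.
  destruct (infinite_sum_geom_tail q (fun j => f j - g j) B m) as [l [Hl Hlb]]; auto.
  - intros j Hj. rewrite Heq by auto. ring.
  - rewrite (uniqueness_sum _ _ _ (infinite_sum_minus _ _ _ _ H1 H2) Hl). exact Hlb.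
Qed.

Lemma sup_R_ub E r : bound E -> E r -> r <= sup_R E.
Proof.
  intros Hb Hr. unfold sup_R. destruct excluded_middle_informative as [H|H].
  - destruct (completeness E (proj1 H) (proj2 H)) as [s Hs]; simpl. exact (proj1 Hs r Hr).
  - exfalso; apply H; split; eauto.
Qed.

Lemma sup_R_le E K : (forall r, E r -> r <= K) -> 0 <= K -> sup_R E <= K.
Proof.
  intros HK H0. unfold sup_R. destruct excluded_middle_informative as [H|H]; [|lra].
  destruct (completeness E (proj1 H) (proj2 H)) as [s Hs]; simpl. exact (proj2 Hs K HK).
Qed.

Lemma sup_R_nonneg E : (forall r, E r -> 0 <= r) -> 0 <= sup_R E.
Proof.
  intros Hp. unfold sup_R. destruct excluded_middle_informative as [H|H]; [|lra].
  destruct (completeness E (proj1 H) (proj2 H)) as [s Hs]; simpl.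
  destruct (proj2 H) as [x Hx]. pose proof (proj1 Hs x Hx). pose proof (Hp x Hx). lra.
Qed.

Lemma inf_R_lb E r : (forall r, E r -> 0 <= r) -> E r -> inf_R E <= r.
Proof.
  unfold inf_R. intros Hp Hr. assert (- r <= sup_R (fun s => E (- s))); [|lra].
  apply sup_R_ub.
  - exists 0. intros s Hs. specialize (Hp _ Hs). lra.
  - rewrite Ropp_involutive; auto.
Qed.

Lemma inf_R_ge E K : (exists r, E r) -> (forall r, E r -> K <= r) -> K <= inf_R E.
Proof.
  intros [r Hr] HK. unfold inf_R, sup_R. destruct excluded_middle_informative as [H|H].
  - destruct (completeness _ (proj1 H) (proj2 H)) as [s Hs]; simpl.
    assert (s <= - K); [|lra]. apply (proj2 Hs). intros t Ht. specialize (HK _ Ht). lra.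
  - exfalso. apply H. split.
    + exists (- K). intros t Ht; specialize (HK _ Ht); lra.
    + exists (- r). rewrite Ropp_involutive; auto.
Qed.

(** * Prefixes of sequences *)

Section Prefixes.

Variable d : nat.
Implicit Types x y u v w : Seq d.

Definition agree n x y : Prop := forall k, (k < n)%nat -> x k = y k.

Lemma first_diff_agree x y N : first_diff x y N -> agree N x y.
Proof. intros [H _]. exact H. Qed.

Lemma agree_eq_or_first_diff n x y : agree n x y ->
  x = y \/ exists N, (n <= N)%nat /\ first_diff x y N.
Proof.
  intros Ha. destruct (classic (x = y)) as [e|ne]; [left; auto|right].
  assert (Hex : exists k, x k <> y k).
  { apply not_all_ex_not. intro H. apply ne. extensionality k. apply H. }
  assert (Hmin : exists N, x N <> y N /\ forall j, (j < N)%nat -> x j = y j).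
  { destruct Hex as [k Hk]. induction k as [k IH] using (well_founded_induction Wf_nat.lt_wf).
    destruct (classic (exists j, (j < k)%nat /\ x j <> y j)) as [[j [Hj Hxj]]|Hno].
    - exact (IH j Hj Hxj).
    - exists k. split; auto. intros j Hj. apply NNPP. intro; apply Hno; eauto. }
  destruct Hmin as [N [HN Hbefore]]. exists N. split; [|split; auto].
  destruct (Compare_dec.le_lt_dec n N) as [h|h]; auto. exfalso; apply HN, Ha, h.
Qed.

Lemma agree_shift n x y : agree n x y -> agree (n - 1) (shift x) (shift y).
Proof. intros H k Hk. apply H. lia. Qed.

Lemma taun_lt p u v k : (k < p)%nat -> taun p u v k = u (p - 1 - k)%nat.
Proof. intros Hk. unfold taun. now rewrite (proj2 (Nat.ltb_lt k p) Hk). Qed.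

Lemma taun_ge p u v k : (p <= k)%nat -> taun p u v k = v (k - p)%nat.
Proof. intros Hk. unfold taun. now rewrite (proj2 (Nat.ltb_ge k p) Hk). Qed.

Lemma taun_0 u v : taun 0 u v = v.
Proof. extensionality k. rewrite taun_ge by lia. f_equal; lia. Qed.

Lemma taun_1 u v : taun 1 u v = tau u v.
Proof.
  extensionality k.
  destruct k; [rewrite taun_lt by lia|rewrite taun_ge by lia]; simpl; f_equal; lia.
Qed.

Lemma shift_tau u v : shift (tau u v) = v.
Proof. reflexivity. Qed.

Lemma shift_taun p u v : shift (taun (S p) u v) = taun p u v.
Proof.
  extensionality k. unfold shift. destruct (Compare_dec.lt_dec k p).
  - rewrite !taun_lt by lia. f_equal; lia.
  - rewrite !taun_ge by lia. f_equal; lia.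
Qed.

Lemma tau_tau_shift x v : tau (tau x v) (shift x) = x.
Proof. extensionality k. destruct k; reflexivity. Qed.

Lemma taun_shift_tau m w y : taun (S m) (shift w) (tau w y) = taun (S (S m)) w y.
Proof.
  extensionality k. unfold shift, tau. destruct (Compare_dec.lt_dec k (S m)).
  - rewrite !taun_lt by lia. f_equal; lia.
  - rewrite taun_ge by lia. destruct (Nat.eq_dec k (S m)) as [->|].
    + rewrite taun_lt, Nat.sub_diag by lia. f_equal; lia.
    + rewrite taun_ge by lia. replace (k - S m)%nat with (S (k - S (S m))) by lia. reflexivity.
Qed.

Definition shiftn m y : Seq d := fun k => y (k + m)%nat.

Lemma shiftn_0 y : shiftn 0 y = y.
Proof. extensionality k. unfold shiftn. f_equal; lia. Qed.

Lemma tau_taun_shiftn m y w : tau (taun (S m) y w) (shiftn (S m) y) = shiftn m y.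
Proof.
  extensionality k. unfold tau, shiftn. destruct k; [rewrite taun_lt by lia|]; f_equal; lia.
Qed.

Lemma taun_agree_l m p u u' v : agree m u u' -> (p <= m)%nat -> taun p u v = taun p u' v.
Proof.
  intros Ha Hp. extensionality k. destruct (Compare_dec.lt_dec k p).
  - rewrite !taun_lt by lia. apply Ha. lia.
  - rewrite !taun_ge by lia. reflexivity.
Qed.

Lemma agree_taun_r p u v v' : agree p (taun p u v) (taun p u v').
Proof. intros k Hk. rewrite !taun_lt by lia. reflexivity. Qed.

Lemma agree_taun_add p n u x x' : agree n x x' -> agree (p + n) (taun p u x) (taun p u x').
Proof.
  intros H k Hk. destruct (Compare_dec.lt_dec k p).
  - rewrite !taun_lt by lia. reflexivity.
  - rewrite !taun_ge by lia. apply H. lia.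
Qed.

Lemma agree_taun_shift n w v : agree n (taun (S n) w v) (taun n (shift w) v).
Proof. intros k Hk. rewrite !taun_lt by lia. unfold shift. f_equal; lia. Qed.

End Prefixes.

Arguments agree {d}.
Arguments shiftn {d}.

(** * Hölder functions with explicit constants *)

(* [holder d lam alpha] is [geom_holder (lam ^ alpha)] up to the choice of the
   constants, measuring closeness by the length of the common prefix. *)
Definition geom_holder {d} (q M C : R) (F : Seq d -> R) : Prop :=
  0 <= M /\ 0 <= C /\ (forall x, Rabs (F x) <= M) /\
  (forall n x y, agree n x y -> Rabs (F x - F y) <= C * q ^ n).

Section GeomHolder.

Variables (d : nat) (q : R).
Hypothesis Hq : 0 < q < 1.
Implicit Types (F A B u : Seq d -> R).

Lemma geom_holder_plus_scal A B M1 C1 M2 C2 c :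
  geom_holder q M1 C1 A -> geom_holder q M2 C2 B ->
  geom_holder q (M1 + Rabs c * M2) (C1 + Rabs c * C2) (fun x => A x + c * B x).
Proof.
  intros (HM1 & HC1 & Hb1 & Hh1) (HM2 & HC2 & Hb2 & Hh2). pose proof (Rabs_pos c).
  split; [nra|]. split; [nra|]. split.
  - intros x. eapply Rle_trans; [apply Rabs_triang|]. rewrite Rabs_mult.
    specialize (Hb1 x); specialize (Hb2 x). nra.
  - intros n x y Hag.
    replace (A x + c * B x - (A y + c * B y)) with ((A x - A y) + c * (B x - B y)) by ring.
    eapply Rle_trans; [apply Rabs_triang|]. rewrite Rabs_mult.
    specialize (Hh1 n x y Hag); specialize (Hh2 n x y Hag).
    assert (Rabs c * Rabs (B x - B y) <= Rabs c * (C2 * q ^ n)) by (apply Rmult_le_compat_l; auto).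
    nra.
Qed.

Lemma geom_holder_coboundary u M C :
  geom_holder q M C u -> geom_holder q (2 * M) (C / q + C) (fun x => u (shift x) - u x).
Proof.
  intros (HM & HC & Hb & Hh). assert (0 <= C / q) by (apply Rle_mult_inv_pos; lra).
  split; [lra|]. split; [lra|]. split.
  - intros x. eapply Rle_trans; [apply Rabs_minus_le|].
    pose proof (Hb x); pose proof (Hb (shift x)). lra.
  - intros n x y Hag.
    replace (u (shift x) - u x - (u (shift y) - u y))
      with ((u (shift x) - u (shift y)) - (u x - u y)) by ring.
    eapply Rle_trans; [apply Rabs_minus_le|].
    pose proof (Hh _ _ _ (agree_shift _ n x y Hag)). pose proof (Hh _ _ _ Hag).
    assert (C * q ^ (n - 1) <= C / q * q ^ n); [|nra].
    destruct n as [|n]; simpl.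
    + assert (C <= C / q); [|lra]. unfold Rdiv. rewrite <- (Rmult_1_r C) at 1.
      apply Rmult_le_compat_l; auto. rewrite <- Rinv_1. apply Rinv_le_contravar; lra.
    + rewrite Nat.sub_0_r. right. field. lra.
Qed.

Lemma geom_holder_0 : geom_holder q 0 0 (fun _ : Seq d => 0).
Proof.
  split; [lra|]. split; [lra|]. split; intros; rewrite ?Rminus_diag, Rabs_R0; lra.
Qed.

End GeomHolder.

Section HolderNorm.

Variables (d : nat) (lam alpha : R).
Hypotheses (Hlam : 0 < lam < 1) (Halpha : 0 < alpha).
Let q := Rpower lam alpha.
Let Hq : 0 < q < 1 := Rpower_lt_1 lam alpha Hlam Halpha.
Implicit Types (F A B u : Seq d -> R).

Lemma holder_geom_holder F : holder d lam alpha F -> exists M C, geom_holder q M C F.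
Proof.
  intros [[M HM] [C HC]]. exists (Rabs M), (Rabs C).
  split; [apply Rabs_pos|]. split; [apply Rabs_pos|]. split.
  - intros x. eapply Rle_trans; [apply HM|apply Rle_abs].
  - intros n x y Hag. destruct (agree_eq_or_first_diff _ n x y Hag) as [->|[N [HnN HN]]].
    + rewrite Rminus_diag, Rabs_R0. apply Rmult_le_pos; [apply Rabs_pos|apply pow_le; lra].
    + eapply Rle_trans; [apply (HC x y N HN)|]. rewrite Rpower_pow_l by lra. fold q.
      assert (0 < q ^ N) by (apply pow_lt; lra).
      apply Rle_trans with (Rabs C * q ^ N).
      * apply Rmult_le_compat_r; [lra|apply Rle_abs].
      * apply Rmult_le_compat_l; [apply Rabs_pos|]. apply pow_le_decr; auto.
Qed.

Lemma geom_holder_holder F M C : geom_holder q M C F -> holder d lam alpha F.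
Proof.
  intros (HM & HC & Hb & Hh). split; [exists M; auto|].
  exists C. intros x y N HN. rewrite Rpower_pow_l by lra. apply Hh, first_diff_agree, HN.
Qed.

Lemma holder_plus_scal A B c : holder d lam alpha A -> holder d lam alpha B ->
  holder d lam alpha (fun x => A x + c * B x).
Proof.
  intros HA HB. destruct (holder_geom_holder A HA) as [M1 [C1 H1]].
  destruct (holder_geom_holder B HB) as [M2 [C2 H2]].
  eapply geom_holder_holder, geom_holder_plus_scal; eauto.
Qed.

Lemma holder_minus A B : holder d lam alpha A -> holder d lam alpha B ->
  holder d lam alpha (fun x => B x - A x).
Proof.
  intros HA HB. replace (fun x => B x - A x) with (fun x => B x + -1 * A x)
    by (extensionality x; ring).
  apply holder_plus_scal; auto.
Qed.

Lemma holder_coboundary u : holder d lam alpha u -> holder d lam alpha (fun x => u (shift x) - u x).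
Proof.
  intros Hu. destruct (holder_geom_holder u Hu) as [M [C H]].
  eapply geom_holder_holder, geom_holder_coboundary; eauto.
Qed.

Lemma holder_add_coboundary D u : holder d lam alpha D -> holder d lam alpha u ->
  holder d lam alpha (fun x => D x + (u (shift x) - u x)).
Proof.
  intros HD Hu. replace (fun x => D x + (u (shift x) - u x))
    with (fun x => D x + 1 * (u (shift x) - u x)) by (extensionality x; ring).
  apply holder_plus_scal, holder_coboundary; auto.
Qed.

Lemma holder_0 : holder d lam alpha (fun _ => 0).
Proof. apply (geom_holder_holder _ 0 0), geom_holder_0. Qed.

Lemma holder_norm_nonneg F : 0 <= holder_norm d lam alpha F.
Proof.
  apply Rplus_le_le_0_compat; apply sup_R_nonneg.
  - intros r [x ->]. apply Rabs_pos.
  - intros r [x [y [N [_ ->]]]]. apply Rle_mult_inv_pos; [apply Rabs_pos|apply exp_pos].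
Qed.

Lemma holder_norm_le F M C : geom_holder q M C F -> holder_norm d lam alpha F <= M + C.
Proof.
  intros (HM & HC & Hb & Hh).
  apply Rplus_le_compat; apply sup_R_le; auto.
  - intros r [x ->]. auto.
  - intros r [x [y [N [HN ->]]]]. rewrite Rpower_pow_l by lra. fold q.
    apply Rdiv_le_of_le_mult; [apply pow_lt; lra|]. apply Hh, first_diff_agree, HN.
Qed.

(* The two suprema in [holder_norm] are themselves admissible constants. *)
Lemma holder_norm_geom_holder F : holder d lam alpha F ->
  exists M C, geom_holder q M C F /\ M + C = holder_norm d lam alpha F.
Proof.
  intros HF. destruct (holder_geom_holder F HF) as [M0 [C0 (HM & HC & Hb & Hh)]].
  set (E1 := fun r => exists x, r = Rabs (F x)).
  set (E2 := fun r => exists x y N, first_diff x y N /\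
                        r = Rabs (F x - F y) / Rpower (lam ^ N) alpha).
  assert (B2 : bound E2).
  { exists C0. intros r [x [y [N [HN ->]]]]. rewrite Rpower_pow_l by lra. fold q.
    apply Rdiv_le_of_le_mult; [apply pow_lt; lra|]. apply Hh, first_diff_agree, HN. }
  assert (P2 : 0 <= sup_R E2).
  { apply sup_R_nonneg. intros r [x [y [N [_ ->]]]].
    apply Rle_mult_inv_pos; [apply Rabs_pos|apply exp_pos]. }
  exists (sup_R E1), (sup_R E2). split; [|reflexivity].
  split; [apply sup_R_nonneg; intros r [x ->]; apply Rabs_pos|]. split; [auto|]. split.
  - intros x. apply sup_R_ub; [exists M0; intros r [z ->]; auto|exists x; auto].
  - intros n x y Hag. destruct (agree_eq_or_first_diff _ n x y Hag) as [->|[N [HnN HN]]].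
    + rewrite Rminus_diag, Rabs_R0. apply Rmult_le_pos; [auto|apply pow_le; lra].
    + assert (Hr : Rabs (F x - F y) / Rpower (lam ^ N) alpha <= sup_R E2)
        by (apply sup_R_ub; auto; exists x, y, N; auto).
      rewrite Rpower_pow_l in Hr by lra. fold q in Hr.
      apply Rle_mult_of_div_le in Hr; [|apply pow_lt; lra].
      eapply Rle_trans; [apply Hr|]. apply Rmult_le_compat_l; auto. apply pow_le_decr; auto.
Qed.

End HolderNorm.

(** * The operator [Lop] on functions with geometric modulus *)

Section Lop.

Variables (d : nat) (q : R) (b : Seq d).
Hypothesis Hq : 0 < q < 1.
Implicit Types (A u : Seq d -> R).

Definition Lop_term A w n : R := A (taun (n + 2) w b) - A (taun (n + 1) (shift w) b).

Lemma Lop_unfold A w : Lop b A w = A (tau w b) + series (Lop_term A w).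
Proof. reflexivity. Qed.

Lemma Lop_term_bound A M C w n : geom_holder q M C A -> Rabs (Lop_term A w n) <= C * q ^ S n.
Proof.
  intros (_ & _ & _ & Hh). apply Hh. unfold Lop_term.
  replace (n + 2)%nat with (S (S n)) by lia. replace (n + 1)%nat with (S n) by lia.
  apply agree_taun_shift.
Qed.

Lemma Lop_term_sum A M C w : geom_holder q M C A ->
  exists l, infinite_sum (Lop_term A w) l /\ Rabs l <= C / (1 - q).
Proof.
  intros HA. apply infinite_sum_geom; auto; [apply HA|].
  intros n. eapply Lop_term_bound; eauto.
Qed.

Lemma Lop_abs_le A M C w : geom_holder q M C A -> Rabs (Lop b A w) <= M + C / (1 - q).
Proof.
  intros HA. destruct (Lop_term_sum A M C w HA) as [l [Hl Hlb]].
  rewrite Lop_unfold, (series_of_infinite_sum _ _ Hl).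
  eapply Rle_trans; [apply Rabs_triang|].
  destruct HA as (_ & _ & Hb & _). specialize (Hb (tau w b)). lra.
Qed.

(* Sequences with a common prefix of length [n + 1] give series whose first [n] terms agree. *)
Lemma Lop_agree A M C n w w' : geom_holder q M C A -> agree (S n) w w' ->
  Rabs (Lop b A w - Lop b A w') <= 2 * C / (1 - q) * q ^ S n.
Proof.
  intros HA Hag. rewrite !Lop_unfold.
  replace (tau w' b) with (tau w b)
    by (rewrite <- !taun_1; apply (taun_agree_l _ (S n)); auto; lia).
  destruct (Lop_term_sum A M C w HA) as [l1 [Hl1 _]].
  destruct (Lop_term_sum A M C w' HA) as [l2 [Hl2 _]].
  rewrite (series_of_infinite_sum _ _ Hl1), (series_of_infinite_sum _ _ Hl2).
  replace (A (tau w b) + l1 - (A (tau w b) + l2)) with (l1 - l2) by ring.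
  apply (infinite_sum_diff_geom_tail q (Lop_term A w) (Lop_term A w')); auto.
  - destruct HA as (_ & HC & _); lra.
  - intros j Hj. unfold Lop_term.
    rewrite (taun_agree_l _ (S n) (j + 2) w w' b Hag) by lia.
    rewrite (taun_agree_l _ (S n - 1) (j + 1) (shift w) (shift w') b (agree_shift _ _ _ _ Hag))
      by lia.
    reflexivity.
  - intros j. eapply Rle_trans; [apply Rabs_minus_le|].
    pose proof (Lop_term_bound A M C w j HA). pose proof (Lop_term_bound A M C w' j HA). lra.
Qed.

Lemma geom_holder_Lop A M C : geom_holder q M C A ->
  geom_holder q (M + C / (1 - q)) (2 * M + 4 * C / (1 - q)) (Lop b A).
Proof.
  intros HA. pose proof HA as (HM & HC & _).
  assert (Hc : 0 <= C / (1 - q)) by (apply Rle_mult_inv_pos; lra).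
  split; [lra|]. split; [unfold Rdiv in *; lra|]. split; [intros; eapply Lop_abs_le; eauto|].
  intros [|n] w w' Hag; simpl.
  - eapply Rle_trans; [apply Rabs_minus_le|].
    pose proof (Lop_abs_le A M C w HA); pose proof (Lop_abs_le A M C w' HA). unfold Rdiv in *. lra.
  - eapply Rle_trans; [apply (Lop_agree A M C n w w' HA Hag)|]. simpl.
    assert (0 <= q * q ^ n) by (apply Rmult_le_pos; [lra|apply pow_le; lra]).
    apply Rmult_le_compat_r; auto. unfold Rdiv in *. lra.
Qed.

Lemma Lop_plus_scal A B M1 C1 M2 C2 c w : geom_holder q M1 C1 A -> geom_holder q M2 C2 B ->
  Lop b (fun x => A x + c * B x) w = Lop b A w + c * Lop b B w.
Proof.
  intros HA HB. rewrite !Lop_unfold.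
  destruct (Lop_term_sum A M1 C1 w HA) as [l1 [Hl1 _]].
  destruct (Lop_term_sum B M2 C2 w HB) as [l2 [Hl2 _]].
  rewrite (series_of_infinite_sum _ _ Hl1), (series_of_infinite_sum _ _ Hl2).
  rewrite (series_of_infinite_sum _ (l1 + c * l2)); [ring|].
  eapply infinite_sum_ext; [|apply (infinite_sum_plus_scal _ _ _ _ c Hl1 Hl2)].
  intros n. unfold Lop_term. ring.
Qed.

Lemma Lop_coboundary u M C w : geom_holder q M C u -> Lop b (fun x => u (shift x) - u x) w = 0.
Proof.
  intros (_ & _ & _ & Hh). rewrite Lop_unfold.
  set (a := fun n => u (taun (S n) w b) - u (taun n (shift w) b)).
  assert (Ha : infinite_sum (Lop_term (fun x => u (shift x) - u x) w) (a O)).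
  { eapply infinite_sum_ext; [|apply infinite_sum_telescope].
    - intros n. unfold Lop_term, a. replace (n + 2)%nat with (S (S n)) by lia.
      replace (n + 1)%nat with (S n) by lia. rewrite !shift_taun. ring.
    - apply (Un_cv_abs_le_0 _ (fun n => C * q ^ n)); [|apply Un_cv_geom; auto].
      intros n. apply Hh, agree_taun_shift. }
  rewrite (series_of_infinite_sum _ _ Ha). unfold a. rewrite taun_1, taun_0, shift_tau. ring.
Qed.

Definition W_term A y w m : R := A (taun (S m) w y) - A (taun (S m) w b).

Definition W A y w : R := series (W_term A y w).

Lemma W_sum A M C y w : geom_holder q M C A ->
  infinite_sum (W_term A y w) (W A y w) /\ Rabs (W A y w) <= C / (1 - q).
Proof.
  intros HA. destruct (infinite_sum_geom q (W_term A y w) C) as [l [Hl Hb]]; auto; [apply HA| |].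
  - intros m. destruct HA as (_ & _ & _ & Hh). apply Hh, agree_taun_r.
  - unfold W. rewrite (series_of_infinite_sum _ _ Hl). auto.
Qed.

Lemma Lop_eq_W A M C y w : geom_holder q M C A ->
  Lop b A w = A (tau w y) + W A (tau w y) (shift w) - W A y w.
Proof.
  intros HA. destruct (Lop_term_sum A M C w HA) as [l [Hl _]].
  rewrite Lop_unfold, (series_of_infinite_sum _ _ Hl).
  set (e := fun m => A (taun (S m) w b) - A (taun (S m) w y)).
  assert (He : infinite_sum (fun m => e m - e (S m)) (e O)).
  { apply infinite_sum_telescope, (Un_cv_abs_le_0 _ (fun n => C * q ^ n));
      [|apply Un_cv_geom; auto].
    intros n. destruct HA as (_ & HC & _ & Hh). eapply Rle_trans; [apply Hh, agree_taun_r|].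
    apply Rmult_le_compat_l; auto. apply pow_le_decr; [auto|lia]. }
  pose proof (infinite_sum_minus _ _ _ _ (infinite_sum_minus _ _ _ _
    (proj1 (W_sum A M C (tau w y) (shift w) HA)) (proj1 (W_sum A M C y w HA))) Hl) as Hs.
  assert (E : W A (tau w y) (shift w) - W A y w - l = e O).
  { eapply uniqueness_sum; [exact Hs|]. eapply infinite_sum_ext; [|exact He].
    intros m. unfold e, W_term, Lop_term. rewrite taun_shift_tau.
    replace (m + 2)%nat with (S (S m)) by lia. replace (m + 1)%nat with (S m) by lia. ring. }
  unfold e in E. rewrite !taun_1 in E. lra.
Qed.

Lemma W_agree A M C z m w w' : geom_holder q M C A -> agree m w w' ->
  Rabs (W A z w - W A z w') <= 2 * C / (1 - q) * q ^ m.
Proof.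
  intros HA Hag.
  apply (infinite_sum_diff_geom_tail q (W_term A z w) (W_term A z w')); auto.
  - destruct HA as (_ & HC & _); lra.
  - apply (W_sum A M C z w HA).
  - apply (W_sum A M C z w' HA).
  - intros j Hj. unfold W_term.
    rewrite (taun_agree_l _ m (S j) w w' z Hag), (taun_agree_l _ m (S j) w w' b Hag) by lia.
    reflexivity.
  - intros j. destruct HA as (_ & _ & _ & Hh).
    eapply Rle_trans; [apply Rabs_minus_le|].
    pose proof (Hh _ _ _ (agree_taun_r _ (S j) w z b)).
    pose proof (Hh _ _ _ (agree_taun_r _ (S j) w' z b)). unfold W_term. lra.
Qed.

(* Summing [Lop_eq_W] along the points [taun (m + 1) y w] telescopes. *)
Lemma Lop_sum_W A M C y w c : geom_holder q M C A ->
  infinite_sum (fun m => Lop b A (taun (S m) y w) - Lop b A (taun (S m) y c)) (W A y w - W A y c).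
Proof.
  intros HA.
  set (a := fun m => W A (shiftn m y) (taun m y w) - W A (shiftn m y) (taun m y c)).
  assert (Ha : infinite_sum (fun m => a m - a (S m)) (a O)).
  { apply infinite_sum_telescope.
    apply (Un_cv_abs_le_0 _ (fun n => 2 * C / (1 - q) * q ^ n)); [|apply Un_cv_geom; auto].
    intros n. apply W_agree with M; auto. apply agree_taun_r. }
  replace (W A y w - W A y c) with (a O) by (unfold a; rewrite !taun_0, shiftn_0; reflexivity).
  eapply infinite_sum_ext; [|exact Ha]. intros m. unfold a.
  rewrite (Lop_eq_W A M C (shiftn (S m) y) (taun (S m) y w) HA).
  rewrite (Lop_eq_W A M C (shiftn (S m) y) (taun (S m) y c) HA).
  rewrite !tau_taun_shiftn, !shift_taun. ring.
Qed.

Lemma geom_holder_W A M C c : geom_holder q M C A ->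
  geom_holder q (C / (1 - q)) (C / (1 - q)) (fun x => - W A x c).
Proof.
  intros HA. pose proof HA as (HM & HC & _ & Hh).
  assert (Hc : 0 <= C / (1 - q)) by (apply Rle_mult_inv_pos; lra).
  split; auto. split; auto. split.
  - intros x. rewrite Rabs_Ropp. apply (W_sum A M C x c HA).
  - intros n x x' Hag. replace (- W A x c - - W A x' c) with (- (W A x c - W A x' c)) by ring.
    rewrite Rabs_Ropp.
    assert (Hqn : 0 <= q ^ n) by (apply pow_le; lra).
    replace (C / (1 - q) * q ^ n) with (C * q ^ n / (1 - q) * q ^ 0) by (simpl; field; lra).
    apply (infinite_sum_diff_geom_tail q (W_term A x c) (W_term A x' c)); auto.
    + apply Rmult_le_pos; auto.
    + apply (W_sum A M C x c HA).
    + apply (W_sum A M C x' c HA).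
    + intros; lia.
    + intros j. unfold W_term.
      replace (A (taun (S j) c x) - A (taun (S j) c b) - (A (taun (S j) c x') - A (taun (S j) c b)))
        with (A (taun (S j) c x) - A (taun (S j) c x')) by ring.
      eapply Rle_trans; [apply Hh, agree_taun_add, Hag|]. rewrite pow_add. right; ring.
Qed.

End Lop.

(* [b] plays the role of [xbar] and [c] that of [wbar]. *)
Lemma Lop_Lop_sub {d} q (b c : Seq d) A M C x : 0 < q < 1 -> geom_holder q M C A ->
  Lop c (Lop b A) x - A x = W d b A x c - W d b A (shift x) c.
Proof.
  intros Hq HA. rewrite (Lop_unfold d c).
  rewrite (series_of_infinite_sum _ (W d b A (shift x) (tau x c) - W d b A (shift x) c)).
  - rewrite (Lop_eq_W d q b Hq A M C (shift x) (tau x c) HA), tau_tau_shift, shift_tau. ring.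
  - eapply infinite_sum_ext; [|apply (Lop_sum_W d q b Hq A M C (shift x) (tau x c) c HA)].
    intros m. unfold Lop_term. rewrite taun_shift_tau.
    replace (m + 2)%nat with (S (S m)) by lia. replace (m + 1)%nat with (S m) by lia. reflexivity.
Qed.

(** * Hölder functions and the operators [L], [L^*] *)

Lemma continuous_wrt_of_bound {d} (dom : (Seq d -> R) -> Prop) (N1 N2 : (Seq d -> R) -> R)
    (f : (Seq d -> R) -> Seq d -> R) K :
  0 < K ->
  (forall A B, dom A -> dom B -> dom (fun x => B x - A x)) ->
  (forall A B, dom A -> dom B -> (fun x => f B x - f A x) = f (fun x => B x - A x)) ->
  (forall D, dom D -> N2 (f D) <= K * N1 D) ->
  continuous_wrt dom N1 N2 f.
Proof.
  intros HK Hsub Hf Hbound A HA eps Heps. exists (eps / K). split; [apply Rdiv_lt_0_compat; lra|].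
  intros B HB Hn. rewrite (Hf A B HA HB).
  eapply Rle_lt_trans; [apply Hbound, Hsub; auto|].
  apply Rmult_lt_compat_l with (r := K) in Hn; [|lra].
  replace (K * (eps / K)) with eps in Hn by (field; lra). lra.
Qed.

Section HolderLop.

Variables (d : nat) (lam alpha : R) (b : Seq d).
Hypotheses (Hlam : 0 < lam < 1) (Halpha : 0 < alpha).
Let q := Rpower lam alpha.
Let Hq : 0 < q < 1 := Rpower_lt_1 lam alpha Hlam Halpha.
Implicit Types (A D F u : Seq d -> R).

Lemma holder_Lop A : holder d lam alpha A -> holder d lam alpha (Lop b A).
Proof.
  intros HA. destruct (holder_geom_holder d lam alpha Hlam Halpha A HA) as [M [C H]].
  eapply geom_holder_holder, geom_holder_Lop; eauto.
Qed.

Lemma Lop_linear : linear_on (holder d lam alpha) (Lop b).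
Proof.
  intros A B c HA HB w.
  destruct (holder_geom_holder d lam alpha Hlam Halpha A HA) as [M1 [C1 H1]].
  destruct (holder_geom_holder d lam alpha Hlam Halpha B HB) as [M2 [C2 H2]].
  eapply Lop_plus_scal; eauto.
Qed.

Lemma Lop_minus A B : holder d lam alpha A -> holder d lam alpha B ->
  (fun x => Lop b B x - Lop b A x) = Lop b (fun x => B x - A x).
Proof.
  intros HA HB. extensionality w.
  replace (fun x => B x - A x) with (fun x => B x + -1 * A x) by (extensionality x; ring).
  rewrite Lop_linear by auto. ring.
Qed.

Lemma Lop_coboundary_0 u :
  holder d lam alpha u -> forall w, Lop b (fun x => u (shift x) - u x) w = 0.
Proof.
  intros Hu w. destruct (holder_geom_holder d lam alpha Hlam Halpha u Hu) as [M [C H]].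
  eapply Lop_coboundary; eauto.
Qed.

Lemma Lop_add_coboundary D u : holder d lam alpha D -> holder d lam alpha u ->
  Lop b (fun x => D x + (u (shift x) - u x)) = Lop b D.
Proof.
  intros HD Hu. extensionality w.
  replace (fun x => D x + (u (shift x) - u x)) with (fun x => D x + 1 * (u (shift x) - u x))
    by (extensionality x; ring).
  rewrite Lop_linear, Lop_coboundary_0 by auto using holder_coboundary. ring.
Qed.

Lemma Lop_in_cob F : in_cob d lam alpha F -> in_cob d lam alpha (Lop b F).
Proof.
  intros [u [Hu HF]]. replace F with (fun x => u (shift x) - u x) by (extensionality x; auto).
  exists (fun _ => 0). split; [apply holder_0; auto|].
  intros x. rewrite Lop_coboundary_0 by auto. ring.
Qed.

(* Dominates the constants of [geom_holder_Lop] by a multiple of [M + C]. *)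
Let K := 3 + 5 / (1 - q).

Lemma Lop_const_pos : 0 < K.
Proof. unfold K. assert (0 <= 5 / (1 - q)) by (apply Rle_mult_inv_pos; lra). lra. Qed.

Lemma holder_norm_Lop_le D : holder d lam alpha D ->
  holder_norm d lam alpha (Lop b D) <= K * holder_norm d lam alpha D.
Proof.
  intros HD. destruct (holder_norm_geom_holder d lam alpha Hlam Halpha D HD) as [M [C [H <-]]].
  fold q in H. pose proof H as (HM & HC & _).
  eapply Rle_trans; [apply holder_norm_le, geom_holder_Lop; eauto|].
  fold q. unfold K, Rdiv. assert (0 < / (1 - q)) by (apply Rinv_0_lt_compat; lra). nra.
Qed.

Lemma Lop_continuous :
  continuous_wrt (holder d lam alpha) (holder_norm d lam alpha) (holder_norm d lam alpha) (Lop b).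
Proof.
  apply (continuous_wrt_of_bound _ _ _ _ K Lop_const_pos).
  - intros; apply holder_minus; auto.
  - apply Lop_minus.
  - apply holder_norm_Lop_le.
Qed.

Lemma qnorm_Lop_le D : holder d lam alpha D ->
  qnorm d lam alpha (Lop b D) <= K * qnorm d lam alpha D.
Proof.
  intros HD. pose proof Lop_const_pos.
  apply Rle_trans with (holder_norm d lam alpha (Lop b D)).
  - apply inf_R_lb; [intros r [u [_ ->]]; apply holder_norm_nonneg|].
    exists (fun _ => 0). split; [apply holder_0; auto|].
    f_equal. extensionality x. ring.
  - rewrite Rmult_comm. apply Rle_mult_of_div_le; auto. apply inf_R_ge.
    + eexists. exists (fun _ => 0). split; [apply holder_0; auto|reflexivity].
    + intros r [u [Hu ->]]. apply Rdiv_le_of_le_mult; auto. rewrite Rmult_comm.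
      rewrite <- (Lop_add_coboundary D u) by auto.
      apply holder_norm_Lop_le, holder_add_coboundary; auto.
Qed.

Lemma Lop_continuous_qnorm :
  continuous_wrt (holder d lam alpha) (qnorm d lam alpha) (qnorm d lam alpha) (Lop b).
Proof.
  apply (continuous_wrt_of_bound _ _ _ _ K Lop_const_pos).
  - intros; apply holder_minus; auto.
  - apply Lop_minus.
  - apply qnorm_Lop_le.
Qed.

Lemma Lop_Lop_sub_in_cob c A : holder d lam alpha A ->
  in_cob d lam alpha (fun x => Lop c (Lop b A) x - A x).
Proof.
  intros HA. destruct (holder_geom_holder d lam alpha Hlam Halpha A HA) as [M [C H]].
  exists (fun x => - W d b A x c). split.
  - eapply geom_holder_holder, geom_holder_W; eauto.
  - intros x. rewrite (Lop_Lop_sub _ b c A M C x Hq H). ring.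
Qed.

End HolderLop.

Theorem mainTheorem19 (d : nat) (lam alpha : R) (xbar wbar : Seq d) :
  0 < lam < 1 -> 0 < alpha ->
  let Ca := holder d lam alpha in
  let nrm := holder_norm d lam alpha in
  let qn := qnorm d lam alpha in
  let inB := in_cob d lam alpha in
  (* (1) *)
  (forall A, Ca A -> Ca (L xbar A)) /\
  (* (2) *)
  (linear_on Ca (L xbar) /\ continuous_wrt Ca nrm nrm (L xbar)) /\
  (* (3) *)
  (forall u, Ca u -> forall w, L xbar (fun x => u (shift x) - u x) w = 0) /\
  (* (4) *)
  ((forall F, inB F -> inB (L xbar F)) /\ continuous_wrt Ca qn qn (L xbar)) /\
  (* (5) *)
  ((forall psi, Ca psi -> Ca (Lstar wbar psi)) /\
   linear_on Ca (Lstar wbar) /\ continuous_wrt Ca nrm nrm (Lstar wbar) /\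
   (forall F, inB F -> inB (Lstar wbar F)) /\
   continuous_wrt Ca qn qn (Lstar wbar) /\
   (forall A, Ca A -> inB (fun x => Lstar wbar (L xbar A) x - A x)) /\
   (forall psi, Ca psi -> inB (fun w => L xbar (Lstar wbar psi) w - psi w))).
Proof.
  intros Hlam Halpha Ca nrm qn inB. unfold Ca, nrm, qn, inB, L, Lstar.
  split; [exact (holder_Lop d lam alpha xbar Hlam Halpha)|].
  split; [split; [exact (Lop_linear d lam alpha xbar Hlam Halpha)
                 |exact (Lop_continuous d lam alpha xbar Hlam Halpha)]|].
  split; [exact (Lop_coboundary_0 d lam alpha xbar Hlam Halpha)|].
  split; [split; [exact (Lop_in_cob d lam alpha xbar Hlam Halpha)
                 |exact (Lop_continuous_qnorm d lam alpha xbar Hlam Halpha)]|].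
  split; [exact (holder_Lop d lam alpha wbar Hlam Halpha)|].
  split; [exact (Lop_linear d lam alpha wbar Hlam Halpha)|].
  split; [exact (Lop_continuous d lam alpha wbar Hlam Halpha)|].
  split; [exact (Lop_in_cob d lam alpha wbar Hlam Halpha)|].
  split; [exact (Lop_continuous_qnorm d lam alpha wbar Hlam Halpha)|].
  split; [exact (Lop_Lop_sub_in_cob d lam alpha xbar Hlam Halpha wbar)
         |exact (Lop_Lop_sub_in_cob d lam alpha wbar Hlam Halpha xbar)].
Qed.
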